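(* For $n\in\{2,3\}$ let $N$ be the $n\times n$ matrix with $N_{i,i+1}=1$ and all other entries zero, and let $N^*=N^T$. For every integer $d\ge1$, the kernel of $\mathrm{ad}_{N^*}$ acting on $F^2_d$ (for $n=2$) has dimension $2$, and the kernel of $\mathrm{ad}_{N^*}$ acting on $F^3_d$ (for $n=3$) has dimension $\lceil 3d/2+1\rceil$.
   Context: $F^n_d$ is the space of vector fields $h:\mathbb{R}^n\to\mathbb{R}^n$ whose components are real homogeneous polynomials of degree $d$. For a matrix $A$, $\mathrm{ad}_A h(\xi)=Dh(\xi)A\xi-Ah(\xi)$ (the Lie bracket $[A\xi,h]$). *)

From HB Require Import structures.
From mathcomp Require Import all_boot all_order all_algebra.
From mathcomp Require Import mpoly.
Set Implicit Arguments. Unset Strict Implicit. Unset Printing Implicit Defensive.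
Import Order.TTheory GRing.Theory Num.Theory.
Local Open Scope ring_scope.

Definition vfield (R : realFieldType) (n : nat) := 'I_n -> {mpoly R[n]}.

Definition in_F (R : realFieldType) (n d : nat) (h : vfield R n) : Prop :=
  forall k : 'I_n, forall m, m \in msupp (h k) -> mdeg m = d.

(* ad_A h (xi) = Dh(xi) A xi - A h(xi), componentwise:
   (ad_A h)_k = sum_j d(h_k)/d x_j * (A x)_j - sum_l A_{k l} h_l. *)
Definition ad (R : realFieldType) (n : nat) (A : 'M[R]_n) (h : vfield R n)
  : vfield R n :=
  fun k => \sum_(j < n) (h k)^`M(j) * (\sum_(l < n) (A j l)%:MP * 'X_l)
           - \sum_(l < n) (A k l)%:MP * h l.

Definition Nmat (R : realFieldType) (n : nat) : 'M[R]_n :=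
  \matrix_(i < n, j < n) (if j == i.+1 :> nat then 1 else 0).

Definition ker_ad_dim (R : realFieldType) (n d : nat) (A : 'M[R]_n) (k : nat)
  : Prop :=
  exists b : 'I_k -> vfield R n,
    [/\ forall i, in_F d (b i) /\ ad A (b i) = (fun _ => 0),
        forall c : 'I_k -> R,
          (forall j, \sum_(i < k) c i *: b i j = 0) -> forall i, c i = 0
      & forall h : vfield R n, in_F d h -> ad A h = (fun _ => 0) ->
          exists c : 'I_k -> R, forall j, h j = \sum_(i < k) c i *: b i j].

From HB Require Import structures.
From mathcomp Require Import all_boot all_order all_algebra.
From mathcomp Require Import mpoly.
From mathcomp Require Import ring zify.
From Stdlib Require Import FunctionalExtensionality.
Set Implicit Arguments. Unset Strict Implicit. Unset Printing Implicit Defensive.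
Import Order.TTheory GRing.Theory Num.Theory.
Local Open Scope ring_scope.

(* For A = N^T one has (ad_A h)_k = D h_k - h_(k-1) with the derivation
   D = x_0 d/dx_1 + ... + x_(n-2) d/dx_(n-1), so h |-> h_(n-1) identifies
   ker ad_A on F^n_d with the kernel of D^n on forms of degree d.
   For n = 2 that kernel is spanned by x0^d and x0^(d-1) x1.
   For n = 3, ker D is spanned by u_k = x0^(d-2k) q^k (2k <= d), where
   q = x1^2 - 2 x0 x2; its intersection with im D is spanned by the u_k with
   2k < d, and these have a tower of preimages u_k <- w_k <- v_k under D.
   Hence ker D^3 has the basis (u_k, w_k, v_k), with
   (floor(d/2) + 1) + 2 ceil(d/2) = ceil(3d/2) + 1 elements. *)

Lemma ltn_halfS k d : (k < d./2.+1)%N = (2 * k <= d)%N.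
Proof. by rewrite ltnS geq_half_double mul2n. Qed.

Lemma ltn_uphalf k d : (k < uphalf d)%N = (2 * k < d)%N.
Proof. by rewrite gtn_uphalf_double mul2n. Qed.

Lemma uphalf_leq_halfS d : (uphalf d <= d./2.+1)%N.
Proof. by rewrite uphalf_half; case: odd. Qed.

Lemma uphalf_3mul_addn1 d :
  (uphalf (3 * d) + 1 = d./2.+1 + (uphalf d + uphalf d))%N.
Proof.
rewrite -[d]odd_double_half; move: (odd d) (d./2) => b j.
rewrite (_ : 3 * (b + j.*2) = b + (3 * j + b).*2)%N; last by case: b; lia.
by rewrite !uphalf_half !oddD !odd_double !oddb !half_bit_double; case: b; lia.
Qed.

Lemma natrS_mul_eq0 (R : numDomainType) k (y : R) : k.+1%:R * y = 0 -> y = 0.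
Proof. by move/eqP; rewrite mulf_eq0 pnatr_eq0 /= => /eqP. Qed.

Lemma sum_mul_delta (R : pzSemiRingType) m (a : 'I_m -> R) (j : 'I_m) :
  \sum_(k < m) a k * (k == j :> nat)%:R = a j.
Proof.
rewrite (bigD1 j) //= eqxx mulr1 big1 ?addr0 // => k.
by rewrite -val_eqE => /negbTE ->; rewrite mulr0.
Qed.

(* (-1)^c tau c and (-1)^k rho (k+1) are positive multiples of tau 0, whereas
   tau N = rho N gives them opposite signs at the end of the chain. *)
Lemma alternating_chain_eq0 (R : realFieldType) N (tau rho a b u v : nat -> R) :
  (0 < N)%N ->
  (forall c, (c < N)%N -> [/\ 0 < a c, 0 < b c, 0 < u c & 0 < v c]) ->
  (forall c, (c < N)%N -> a c * tau c + b c * tau c.+1 = 0) ->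
  (forall k, (k.+1 < N)%N -> tau k.+1 = u k * rho k.+1 + v k * rho k.+2) ->
  tau 0%N = rho 1%N -> tau N = rho N -> tau 0%N = 0.
Proof.
move=> N_gt0 pos rec_tau rec_rho tau0 tauN.
pose T c := (-1) ^+ c * tau c; pose S k := (-1) ^+ k * rho k.+1.
have T_pos c : (c <= N)%N -> exists2 s, 0 < s & T c = s * T 0%N.
  elim: c => [_|c IHc lt_cN]; first by exists 1; rewrite ?mul1r.
  have [s s_gt0 Es] := IHc (ltnW lt_cN); have [a_gt0 b_gt0 _ _] := pos c lt_cN.
  exists (a c / b c * s); first by rewrite !mulr_gt0 ?invr_gt0.
  have : b c * T c.+1 - a c * T c = - (-1) ^+ c * (a c * tau c + b c * tau c.+1).
    by rewrite /T exprS; ring.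
  rewrite rec_tau // mulr0 => /eqP; rewrite subr_eq0 => /eqP ET.
  by rewrite -(mulrA _ s) -Es -[T c.+1](mulKf (lt0r_neq0 b_gt0)) ET; ring.
have S_pos k : (k < N)%N -> exists2 t, 0 < t & S k = t * T 0%N.
  elim: k => [_|k IHk lt_kN]; first by exists 1; rewrite ?mul1r // /S /T tau0.
  have [t t_gt0 Et] := IHk (ltnW lt_kN); have [s s_gt0 Es] := T_pos k.+1 (ltnW lt_kN).
  have [_ _ u_gt0 v_gt0] := pos k (ltnW lt_kN).
  exists ((s + u k * t) / v k); first by rewrite mulr_gt0 ?invr_gt0 ?addr_gt0 ?mulr_gt0.
  have : v k * S k.+1 - T k.+1 - u k * S k =
      (-1) ^+ k.+1 * (u k * rho k.+1 + v k * rho k.+2 - tau k.+1).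
    by rewrite /S /T exprS; ring.
  rewrite -rec_rho // subrr mulr0 => /eqP; rewrite subr_eq0 subr_eq => /eqP ES.
  by rewrite -[S k.+1](mulKf (lt0r_neq0 v_gt0)) ES Es Et; ring.
case: N N_gt0 pos rec_tau rec_rho tauN T_pos S_pos => // M _ _ _ _ tauN T_pos S_pos.
have [s s_gt0 Es] := T_pos M.+1 (leqnn _); have [t t_gt0 Et] := S_pos M (ltnSn _).
have : T M.+1 + S M = 0 by rewrite /T /S tauN exprS; ring.
rewrite Es Et -mulrDl => /eqP; rewrite mulf_eq0 => /orP[|/eqP].
  by rewrite gt_eqF // addr_gt0.
by rewrite /T expr0 mul1r.
Qed.

Section MpolyFacts.
Variables (R : realFieldType) (n : nat).
Implicit Types (p : {mpoly R[n]}) (i j : 'I_n) (m : 'X_{1..n}).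

Lemma in_F_dhomog d (h : vfield R n) : in_F d h <-> forall k, h k \is d.-homog.
Proof.
split=> [Hh k | Hh k m]; first by apply/dhomogP => m; apply: Hh.
exact: dhomog_mf.
Qed.

Lemma mcoeffMXU p i m :
  (p * 'X_i)@_m = if m i is 0%N then 0 else p@_(m - U_(i))%MM.
Proof.
case Emi: (m i) => [|k].
  apply/eqP; rewrite mcoeff_eq0 (perm_mem (msuppMX p U_(i))).
  by apply/mapP => -[m' _ Em]; move: Emi; rewrite Em mnmDE mnm1E eqxx.
have -> : m = (U_(i) + (m - U_(i)))%MM by rewrite addmC submK // lep1mP Emi.
by rewrite mcoeffMX addmC addmK.
Qed.

Lemma mderivXU i j : ('X_i : {mpoly R[n]})^`M(j) = (i == j)%:R.
Proof.
rewrite mderivX mnm1E; case: eqP => [->|_]; last by rewrite scale0r.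
by rewrite -{1}[U_(j)%MM]add0m addmK mpolyX0 scale1r.
Qed.

Lemma mcoeff_mderiv_eq0 p i m : p^`M(i) = 0 -> m i != 0%N -> p@_m = 0.
Proof.
move=> dp0 mi_neq0; have := congr1 (mcoeff (m - U_(i))) dp0.
by rewrite mcoeff_mderiv mcoeff0 submK ?lep1mP // => /eqP; rewrite mulrn_eq0 => /eqP.
Qed.

Lemma scale_mpolyX_eq0 (c : R) m : c *: 'X_[m] = 0 :> {mpoly R[n]} -> c = 0.
Proof. by move=> /(congr1 (mcoeff m)); rewrite mcoeffZ mcoeffX eqxx mulr1 mcoeff0. Qed.

Lemma dhomogXn i k : ('X_i : {mpoly R[n]}) ^+ k \is k.-homog.
Proof. by rewrite mpolyXn dhomogX /= mdegMn mdeg1 mul1n. Qed.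

Lemma dhomog_mderivMX d p i j : p \is d.-homog -> p^`M(j) * 'X_i \is d.-homog.
Proof.
move=> p_homog; rewrite (mpolyE p) raddf_sum mulr_suml big_seq; apply: rpred_sum.
move=> m /(dhomog_mf p_homog) degm; rewrite /= mderivZ mderivX -!scalerAl.
apply: dhomogZ; case Emj: (m j) => [|k]; first by rewrite scale0r rpred0.
apply: dhomogZ; rewrite -mpolyXD dhomogX; apply/eqP => /=; rewrite mdegD mdeg1 -degm /=.
have Ujm : (U_(j) <= m)%MM by rewrite lep1mP Emj.
by rewrite -{2}(submK Ujm) mdegD mdeg1.
Qed.

End MpolyFacts.

Section ShiftDerivation.
Variables (R : realFieldType) (n : nat).
Implicit Types (p q : {mpoly R[n.+1]}) (h : vfield R n.+1).

(* N^T xi = (0, xi_0, ..., xi_(n-1)), so this derivation is the Dh(xi) N^T xi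
   part of ad_(N^T); see ad_Nmat_tr. *)
Definition shift_deriv p : {mpoly R[n.+1]} :=
  \sum_(i < n) p^`M(lift ord0 i) * 'X_(widen_ord (leqnSn n) i).

Lemma shift_deriv_is_linear : linear shift_deriv.
Proof.
move=> c p q; rewrite /shift_deriv scaler_sumr -big_split; apply: eq_bigr => i _.
by rewrite mderivD mderivZ mulrDl scalerAl.
Qed.

HB.instance Definition _ :=
  GRing.isLinear.Build R {mpoly R[n.+1]} {mpoly R[n.+1]} _ shift_deriv
    shift_deriv_is_linear.

Lemma shift_derivM p q :
  shift_deriv (p * q) = shift_deriv p * q + p * shift_deriv q.
Proof.
rewrite /shift_deriv mulr_suml mulr_sumr -big_split; apply: eq_bigr => i _.
by rewrite /= mderivM; ring.
Qed.

Lemma shift_deriv_exp_eq0 p k : shift_deriv p = 0 -> shift_deriv (p ^+ k) = 0.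
Proof.
move=> Dp0; elim: k => [|k IHk]; last first.
  by rewrite exprS shift_derivM Dp0 IHk mul0r mulr0 addr0.
by rewrite expr0 /shift_deriv big1 // => i _; rewrite mderivC mul0r.
Qed.

Lemma shift_deriv_sumZ (I : finType) (c : I -> R) (e : I -> {mpoly R[n.+1]}) :
  shift_deriv (\sum_i c i *: e i) = \sum_i c i *: shift_deriv (e i).
Proof. by rewrite linear_sum; apply: eq_bigr => i _; apply: linearZ. Qed.

Lemma iter_shift_deriv_sumZ k (I : finType) (c : I -> R) (e : I -> {mpoly R[n.+1]}) :
  iter k shift_deriv (\sum_i c i *: e i) = \sum_i c i *: iter k shift_deriv (e i).
Proof. by elim: k => //= k ->; apply: shift_deriv_sumZ. Qed.

Lemma dhomog_shift_deriv d p : p \is d.-homog -> shift_deriv p \is d.-homog.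
Proof. by move=> p_homog; apply: rpred_sum => i _; apply: dhomog_mderivMX. Qed.

Lemma dhomog_iter_shift_deriv d k p :
  p \is d.-homog -> iter k shift_deriv p \is d.-homog.
Proof. by move=> p_homog; elim: k => //= k; apply: dhomog_shift_deriv. Qed.

Lemma sum_Nmat_tr (j : 'I_n.+1) (F : 'I_n.+1 -> {mpoly R[n.+1]}) :
  \sum_l ((Nmat R n.+1)^T j l)%:MP * F l =
  if unlift ord0 j is Some j' then F (widen_ord (leqnSn n) j') else 0.
Proof.
have entry l : ((Nmat R n.+1)^T j l)%:MP * F l = if j == l.+1 :> nat then F l else 0.
  by rewrite !mxE; case: ifP; rewrite ?mpolyC1 ?mpolyC0 ?mul1r ?mul0r.
under eq_bigr => l _ do rewrite entry.
case: unliftP => [j'|] -> /=; last by rewrite big1.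
rewrite (bigD1 (widen_ord (leqnSn n) j')) //= /bump add1n eqxx big1 ?addr0 // => l.
by rewrite eqSS => ne_l; case: eqP => // Ejl; case/eqP: ne_l; apply: val_inj.
Qed.

Lemma ad_Nmat_tr h k :
  ad (Nmat R n.+1)^T h k = shift_deriv (h k) -
    (if unlift ord0 k is Some k' then h (widen_ord (leqnSn n) k') else 0).
Proof.
rewrite /ad sum_Nmat_tr; congr (_ - _).
under eq_bigr => j _ do rewrite sum_Nmat_tr.
rewrite big_ord_recl unlift_none mulr0 add0r.
by apply: eq_bigr => i _; rewrite liftK.
Qed.

Lemma ad_Nmat_tr_eq0 h :
  ad (Nmat R n.+1)^T h = (fun _ => 0) <->
  iter n.+1 shift_deriv (h ord_max) = 0 /\
  forall k : 'I_n.+1, h k = iter (n - k) shift_deriv (h ord_max).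
Proof.
split=> [adh0 | [Dh0 Eh]]; last first.
  apply: functional_extensionality => k; rewrite ad_Nmat_tr.
  case: unliftP => [k'|] -> /=; last by rewrite (Eh ord0) -iterS subn0 Dh0 subr0.
  rewrite (Eh (lift _ _)) (Eh (widen_ord _ _)) /= /bump add1n -iterS subnSK //.
  by rewrite subrr.
have ad_at k : ad (Nmat R n.+1)^T h k = 0 by rewrite adh0.
have chain j : (j <= n)%N -> h (inord (n - j)) = iter j shift_deriv (h ord_max).
  elim: j => [_|j IHj lt_jn].
    by congr h; apply: val_inj; rewrite /= subn0 inordK.
  have lt_k : (n - j.+1 < n)%N by lia.
  have := ad_at (lift ord0 (Ordinal lt_k)).
  rewrite ad_Nmat_tr liftK => /eqP; rewrite subr_eq0 => /eqP Ehk.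
  rewrite [LHS](_ : _ = h (widen_ord (leqnSn n) (Ordinal lt_k))); last first.
    by congr h; apply: val_inj; rewrite /= inordK //; lia.
  rewrite -Ehk iterS -IHj 1?ltnW //; congr (shift_deriv (h _)); apply: val_inj.
  by rewrite /= /bump add1n inordK; lia.
have Eh k : h k = iter (n - k) shift_deriv (h ord_max).
  rewrite -chain ?leq_subr //; congr h; apply: val_inj.
  by rewrite /= subKn ?inordK // -ltnS.
split=> //; have := ad_at ord0; rewrite ad_Nmat_tr unlift_none subr0 (Eh ord0).
by rewrite -iterS subn0.
Qed.

Lemma ker_ad_dim_Nmat_tr d k (e : 'I_k -> {mpoly R[n.+1]}) :
  (forall i, e i \is d.-homog) ->
  (forall i, iter n.+1 shift_deriv (e i) = 0) ->
  (forall c : 'I_k -> R, \sum_i c i *: e i = 0 -> forall i, c i = 0) ->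
  (forall p, p \is d.-homog -> iter n.+1 shift_deriv p = 0 ->
     exists c : 'I_k -> R, p = \sum_i c i *: e i) ->
  ker_ad_dim d (Nmat R n.+1)^T k.
Proof.
move=> e_homog e_ker e_free e_span.
exists (fun i j => iter (n - j) shift_deriv (e i)); split.
- move=> i; split; first by apply/in_F_dhomog => j; apply: dhomog_iter_shift_deriv.
  by apply/ad_Nmat_tr_eq0; rewrite /= subnn; split=> //; apply: e_ker.
- by move=> c /(_ ord_max); rewrite /= subnn; apply: e_free.
move=> h /in_F_dhomog h_homog /ad_Nmat_tr_eq0[hmax_ker Eh].
have [c Ec] := e_span _ (h_homog ord_max) hmax_ker.
by exists c => j; rewrite Eh Ec iter_shift_deriv_sumZ.
Qed.

End ShiftDerivation.

Section TwoVariables.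
Variable R : realFieldType.
Local Notation D := (@shift_deriv R 1).
Local Notation x0 := ('X_ord0 : {mpoly R[2]}).
Local Notation x1 := ('X_ord_max : {mpoly R[2]}).

Lemma shift_deriv2E (p : {mpoly R[2]}) : D p = p^`M(ord_max) * x0.
Proof. by rewrite /shift_deriv big_ord1; congr (_^`M(_) * 'X__); apply: val_inj. Qed.

Lemma shift_deriv2_X0n k : D (x0 ^+ k) = 0.
Proof. by apply: shift_deriv_exp_eq0; rewrite shift_deriv2E mderivXU mul0r. Qed.

Lemma shift_deriv2_X0nX1 k : D (x0 ^+ k * x1) = x0 ^+ k.+1.
Proof.
rewrite shift_derivM shift_deriv2_X0n mul0r add0r shift_deriv2E mderivXU.
by rewrite /= mul1r exprSr.
Qed.

Lemma mnm2_eta (m : 'X_{1..2}) :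
  m = (U_(ord0) *+ m ord0 + U_(ord_max) *+ m ord_max)%MM.
Proof.
apply/mnmP => j; rewrite mnmDE !mulmnE !mnm1E.
case: j => [[|[|j]] lt_j] //=; rewrite ?mul1n ?mul0n ?addn0.
all: by congr (m _); apply: val_inj.
Qed.

Lemma shift_deriv2_ker d p : p \is d.-homog -> D p = 0 ->
  p = p@_(U_(ord0) *+ d) *: x0 ^+ d.
Proof.
move=> p_homog; have x0_neq0 : x0 != 0.
  apply/eqP => /(congr1 (mcoeff U_(ord0))).
  by rewrite mcoeffX eqxx mcoeff0 => /eqP; rewrite oner_eq0.
rewrite shift_deriv2E => /eqP; rewrite mulf_eq0 (negbTE x0_neq0) orbF => /eqP dp0.
apply/mpolyP => m; rewrite mcoeffZ mpolyXn mcoeffX.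
have [m1_eq0 | m1_neq0] := eqVneq (m ord_max) 0%N; last first.
  rewrite (mcoeff_mderiv_eq0 dp0 m1_neq0); case: eqP => [Em|]; last by rewrite mulr0.
  by move: m1_neq0; rewrite -Em mulmnE mnm1E.
rewrite (mnm2_eta m) m1_eq0 mulm0n addm0.
have [-> | m0_neq_d] := eqVneq (m ord0) d; first by rewrite eqxx mulr1.
rewrite (dhomog_nemf_coeff p_homog); last by rewrite /= mdegMn mdeg1 mul1n.
case: eqP => [Em|_]; last by rewrite mulr0.
have := congr1 (fun m : 'X_{1..2} => m ord0) Em.
by rewrite /= !mulmnE mnm1E !mul1n => Ed; rewrite Ed eqxx in m0_neq_d.
Qed.

Lemma ker_ad_dim_Nmat2 d : (1 <= d)%N -> ker_ad_dim d (Nmat R 2)^T 2.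
Proof.
move=> d_gt0; set w := x0 ^+ d.-1 * x1.
have Dw : D w = x0 ^+ d by rewrite shift_deriv2_X0nX1 prednK.
have w_homog : w \is d.-homog.
  by have := dhomogM (dhomogXn R ord0 d.-1) (dhomogXn R ord_max 1); rewrite addn1 prednK.
apply: (@ker_ad_dim_Nmat_tr _ _ _ _ (fun i => if i == ord0 then x0 ^+ d else w)).
- by move=> i; case: ifP => _; rewrite ?dhomogXn.
- by move=> i; case: ifP => _ /=; rewrite ?Dw shift_deriv2_X0n ?raddf0.
- move=> c; rewrite big_ord_recl big_ord1 /= => Ec.
  have := congr1 D Ec; rewrite linearD !linearZ /= Dw shift_deriv2_X0n.
  rewrite scaler0 add0r raddf0 mpolyXn => /scale_mpolyX_eq0 c1_eq0.
  move: Ec; rewrite c1_eq0 scale0r addr0 mpolyXn => /scale_mpolyX_eq0 c0_eq0.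
  case=> -[|[|//]] lt_i; [rewrite -c0_eq0 | rewrite -c1_eq0]; congr c; exact: val_inj.
move=> p p_homog /= DDp.
have Dp := shift_deriv2_ker (dhomog_shift_deriv p_homog) DDp.
set b := _@_(_) in Dp.
have := @shift_deriv2_ker d (p - b *: w).
rewrite rpredB ?rpredZ // linearB linearZ /= Dw -Dp subrr => /(_ isT erefl) Ep.
exists (fun i => if i == ord0 then (p - b *: w)@_(U_(ord0) *+ d) else b).
by rewrite big_ord_recl big_ord1 /= -Ep subrK.
Qed.

End TwoVariables.

Section ThreeVariables.
Variable R : realFieldType.
Local Notation D := (@shift_deriv R 2).
Local Notation j0 := (@Ordinal 3 0 isT).
Local Notation j1 := (@Ordinal 3 1 isT).
Local Notation j2 := (@Ordinal 3 2 isT).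
Local Notation x0 := ('X_j0 : {mpoly R[3]}).
Local Notation x1 := ('X_j1 : {mpoly R[3]}).
Local Notation x2 := ('X_j2 : {mpoly R[3]}).

Lemma ord3P (j : 'I_3) : [\/ j = j0, j = j1 | j = j2].
Proof.
case: j => -[|[|[|//]]] lt_j; [constructor 1 | constructor 2 | constructor 3].
all: exact: val_inj.
Qed.

Definition mnm3 a b c : 'X_{1..3} := [multinom nth 0%N [:: a; b; c] i | i < 3].
Local Notation coef3 p a b c := (mcoeff (mnm3 a b c) p).

Lemma mnm3_eta (m : 'X_{1..3}) : m = mnm3 (m j0) (m j1) (m j2).
Proof. by apply/mnmP => j; case: (ord3P j) => ->; rewrite mnmE. Qed.

Lemma mnm3_inj a b c a' b' c' :
  mnm3 a b c = mnm3 a' b' c' -> [/\ a = a', b = b' & c = c'].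
Proof.
move=> /mnmP E; split; [move: (E j0) | move: (E j1) | move: (E j2)].
all: by rewrite !mnmE.
Qed.

Lemma mdeg_mnm3 a b c : mdeg (mnm3 a b c) = (a + b + c)%N.
Proof. by rewrite mdegE !big_ord_recr big_ord0 /= !mnmE. Qed.

Lemma mpolyX_mnm3 a b c : 'X_[mnm3 a b c] = x0 ^+ a * x1 ^+ b * x2 ^+ c.
Proof.
rewrite !mpolyXn -!mpolyXD; congr mpolyX; apply/mnmP => j.
by case: (ord3P j) => ->; rewrite !mnmDE !mulmnE !mnm1E !mnmE /=; lia.
Qed.

Lemma coef3_eq0 d (p : {mpoly R[3]}) a b c :
  p \is d.-homog -> (a + b + c != d)%N -> coef3 p a b c = 0.
Proof. by move=> p_homog; rewrite -mdeg_mnm3; apply: dhomog_nemf_coeff. Qed.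

Lemma shift_deriv3E p : D p = p^`M(j1) * x0 + p^`M(j2) * x1.
Proof.
rewrite /shift_deriv big_ord_recl big_ord1.
by congr (_^`M(_) * 'X__ + _^`M(_) * 'X__); apply: val_inj.
Qed.

Lemma shift_deriv3_X0 : D x0 = 0.
Proof. by rewrite shift_deriv3E !mderivXU /= !mul0r addr0. Qed.

Lemma shift_deriv3_X1 : D x1 = x0.
Proof. by rewrite shift_deriv3E !mderivXU /= mul1r mul0r addr0. Qed.

Lemma shift_deriv3_X2 : D x2 = x1.
Proof. by rewrite shift_deriv3E !mderivXU /= mul1r mul0r add0r. Qed.

Lemma coef3_shift_deriv p a b c : coef3 (D p) a b c =
  (if a is a'.+1 then b.+1%:R * coef3 p a' b.+1 c else 0) +
  (if b is b'.+1 then c.+1%:R * coef3 p a b' c.+1 else 0).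
Proof.
rewrite shift_deriv3E mcoeffD !mcoeffMXU !mnmE /=.
congr (_ + _); [case: a => [|a] | case: b => [|b]] => //.
all: rewrite mcoeff_mderiv mulr_natl mnmBE mnm1E mnmE /= subn0; congr (mcoeff _ _ *+ _).
all: by apply/mnmP => j; case: (ord3P j) => ->; rewrite !mnmDE !mnmBE !mnm1E !mnmE /=; lia.
Qed.

Lemma shift_deriv3_ker_eq0 d (p : {mpoly R[3]}) : p \is d.-homog -> D p = 0 ->
  (forall j, (2 * j <= d)%N -> coef3 p (d - 2 * j) (2 * j) 0 = 0) -> p = 0.
Proof.
move=> p_homog Dp0 p_diag0.
have coefD0 a b c : coef3 (D p) a b c = 0 by rewrite Dp0 mcoeff0.
have odd0 j a c : coef3 p a (2 * j).+1 c = 0.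
  elim: j a c => [|j IHj] a c.
    by have := coefD0 a.+1 0%N c; rewrite coef3_shift_deriv addr0 => /natrS_mul_eq0.
  have := coefD0 a.+1 (2 * j).+2 c; rewrite coef3_shift_deriv IHj mulr0 addr0.
  by rewrite (_ : (2 * j.+1).+1 = (2 * j).+3)%N; [move/natrS_mul_eq0 | lia].
have base a b : coef3 p a b 0 = 0.
  have [Ed|] := eqVneq (a + b + 0)%N d; last exact: coef3_eq0.
  move: Ed; rewrite -[b]odd_double_half -mul2n; case: (odd b) => Ed; first exact: odd0.
  by rewrite add0n (_ : a = d - 2 * b./2)%N; [apply: p_diag0 | ]; lia.
suff coef0 c a b : coef3 p a b c = 0.
  by apply/mpolyP => m; rewrite mcoeff0 (mnm3_eta m) coef0.
elim: c a b => [|c IHc] a b; first exact: base.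
case: a => [|a].
  by have := coefD0 0%N b.+1 c; rewrite coef3_shift_deriv add0r => /natrS_mul_eq0.
have := coefD0 a.+1 b.+1 c.
by rewrite coef3_shift_deriv IHc mulr0 add0r => /natrS_mul_eq0.
Qed.

Definition q3 : {mpoly R[3]} := x1 ^+ 2 - x0 * x2 *+ 2.
Definition u3 d k : {mpoly R[3]} := x0 ^+ (d - 2 * k) * q3 ^+ k.
Definition w3 d k : {mpoly R[3]} := x0 ^+ (d - 2 * k).-1 * x1 * q3 ^+ k.
Definition v3 d k : {mpoly R[3]} := x0 ^+ (d - 2 * k).-1 * x2 * q3 ^+ k.

Lemma shift_deriv_q3 : D q3 = 0.
Proof.
rewrite /q3 expr2 linearB linearMn /= !shift_derivM.
by rewrite shift_deriv3_X0 shift_deriv3_X1 shift_deriv3_X2; ring.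
Qed.

Lemma shift_deriv_u3 d k : D (u3 d k) = 0.
Proof.
rewrite shift_derivM !shift_deriv_exp_eq0 ?shift_deriv_q3 ?shift_deriv3_X0 //.
by rewrite mul0r mulr0 addr0.
Qed.

Lemma shift_deriv_w3 d k : (2 * k < d)%N -> D (w3 d k) = u3 d k.
Proof.
move=> lt_2k_d; rewrite /w3 /u3 !shift_derivM shift_deriv3_X1.
rewrite !shift_deriv_exp_eq0 ?shift_deriv_q3 ?shift_deriv3_X0 //.
by rewrite -[in RHS](prednK (_ : 0 < d - 2 * k)%N) ?subn_gt0 // exprSr; ring.
Qed.

Lemma shift_deriv_v3 d k : D (v3 d k) = w3 d k.
Proof.
rewrite /v3 /w3 !shift_derivM shift_deriv3_X2.
by rewrite !shift_deriv_exp_eq0 ?shift_deriv_q3 ?shift_deriv3_X0 //; ring.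
Qed.

Lemma dhomog_q3 : q3 \is 2.-homog.
Proof.
rewrite rpredB ?dhomogXn // rpredMn //.
by have := dhomogM (dhomogXn R j0 1) (dhomogXn R j2 1).
Qed.

Lemma dhomog_u3 d k : (2 * k <= d)%N -> u3 d k \is d.-homog.
Proof.
move=> le_2k_d; have := dhomogM (dhomogXn R j0 (d - 2 * k)) (dhomogMn k dhomog_q3).
by rewrite subnK.
Qed.

Lemma dhomog_w3 d k : (2 * k < d)%N -> w3 d k \is d.-homog.
Proof.
move=> lt_2k_d; have := dhomogM (dhomogXn R j0 (d - 2 * k).-1) (dhomogXn R j1 1).
move/dhomogM/(_ (dhomogMn k dhomog_q3)).
by rewrite addn1 prednK ?subn_gt0 // subnK // ltnW.
Qed.

Lemma dhomog_v3 d k : (2 * k < d)%N -> v3 d k \is d.-homog.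
Proof.
move=> lt_2k_d; have := dhomogM (dhomogXn R j0 (d - 2 * k).-1) (dhomogXn R j2 1).
move/dhomogM/(_ (dhomogMn k dhomog_q3)).
by rewrite addn1 prednK ?subn_gt0 // subnK // ltnW.
Qed.

Lemma q3_exp_split k : exists r, q3 ^+ k = x1 ^+ (2 * k) + r * x2.
Proof.
elim: k => [|k [r Er]]; first by exists 0; rewrite expr0 mul0r addr0.
exists (x1 ^+ 2 * r - x0 * x1 ^+ (2 * k) *+ 2 - x0 * x2 * r *+ 2).
by rewrite exprS Er /q3 mulnS exprD; ring.
Qed.

Lemma coef3_u3 d k j : (2 * k <= d)%N -> (2 * j <= d)%N ->
  coef3 (u3 d k) (d - 2 * j) (2 * j) 0 = (k == j)%:R.
Proof.
move=> le_2k_d le_2j_d; have [r Er] := q3_exp_split k.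
rewrite /u3 Er mulrDr mcoeffD mulrA mcoeffMXU mnmE addr0.
rewrite (_ : _ * _ = 'X_[mnm3 (d - 2 * k) (2 * k) 0]); last by rewrite mpolyX_mnm3 mulr1.
rewrite mcoeffX; congr (_%:R).
have [->|ne_kj] := eqVneq k j; first by rewrite eqxx.
by case: eqP => // /mnm3_inj[_ E _]; move/eqP: ne_kj; lia.
Qed.

Lemma u3_free d m (a : 'I_m -> R) : (m <= d./2.+1)%N ->
  \sum_(k < m) a k *: u3 d k = 0 -> forall k, a k = 0.
Proof.
move=> le_m Ea j; have le_2k_d (k : 'I_m) : (2 * k <= d)%N.
  by rewrite -ltn_halfS (leq_trans _ le_m).
have := congr1 (mcoeff (mnm3 (d - 2 * j) (2 * j) 0)) Ea.
rewrite raddf_sum mcoeff0 /=; under eq_bigr => k _ do rewrite mcoeffZ coef3_u3 //.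
by rewrite sum_mul_delta.
Qed.

Lemma shift_deriv3_ker_span d p : p \is d.-homog -> D p = 0 ->
  p = \sum_(k < d./2.+1) coef3 p (d - 2 * k) (2 * k) 0 *: u3 d k.
Proof.
move=> p_homog Dp0; have le_2k_d (k : 'I_d./2.+1) : (2 * k <= d)%N by rewrite -ltn_halfS.
apply/eqP; rewrite -subr_eq0; apply/eqP; apply: (@shift_deriv3_ker_eq0 d).
- by rewrite rpredB // rpred_sum // => k _; rewrite rpredZ // dhomog_u3.
- rewrite linearB /= shift_deriv_sumZ Dp0 big1 ?subr0 // => k _.
  by rewrite shift_deriv_u3 scaler0.
move=> j le_2j_d; have lt_j : (j < d./2.+1)%N by rewrite ltn_halfS.
rewrite mcoeffB raddf_sum /=; under eq_bigr => k _ do rewrite mcoeffZ coef3_u3 //.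
by rewrite (sum_mul_delta _ (Ordinal lt_j)) subrr.
Qed.

(* Along the monomials x0^c x1^(d-2c) x2^c, the relation D^2 s = 0 makes the
   coefficients of D s alternate in sign; so q3^(N+1) is not in the image of D. *)
Lemma coef3_top_shift_deriv_ker N s : s \is (2 * N.+1).-homog -> D (D s) = 0 ->
  coef3 (D s) 0 (2 * N.+1) 0 = 0.
Proof.
move=> s_homog DDs0; set d := (2 * N.+1)%N; have Ed : d = (2 * N.+1)%N by [].
have := @alternating_chain_eq0 R N.+1 (fun c => coef3 (D s) c (d - 2 * c) c)
  (fun c => coef3 s c.-1 (d.+1 - 2 * c) c) (fun c => (d - 2 * c)%:R) (fun c => c.+1%:R)
  (fun k => (d.+1 - 2 * k.+1)%:R) (fun k => k.+2%:R).
rewrite subn0; apply=> //.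
- by move=> c lt_cN; split; rewrite ltr0n //; lia.
- move=> c lt_cN; have := coef3_shift_deriv (D s) c.+1 (d - 2 * c.+1).+1 c.
  by rewrite DDs0 mcoeff0 (_ : (d - 2 * c.+1).+2 = d - 2 * c)%N => [/esym|]; last lia.
- move=> k lt_kN; rewrite (_ : d - 2 * k.+1 = (d.+1 - 2 * k.+2).+1)%N; last by lia.
  by rewrite coef3_shift_deriv (_ : (d.+1 - 2 * k.+2).+2 = d.+1 - 2 * k.+1)%N //; lia.
- rewrite (_ : mnm3 0 d 0 = mnm3 0 (d.+1 - 2 * 1).+1 0); last by congr mnm3; lia.
  by rewrite coef3_shift_deriv add0r mul1r.
rewrite (_ : d - 2 * N.+1 = 0)%N; last by lia.
rewrite (_ : d.+1 - 2 * N.+1 = 1)%N; last by lia.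
by rewrite coef3_shift_deriv addr0 mul1r.
Qed.

Lemma shift_deriv3_ker_im d s : s \is d.-homog -> D (D s) = 0 ->
  D s = \sum_(k < uphalf d) coef3 (D s) (d - 2 * k) (2 * k) 0 *: u3 d k.
Proof.
move=> s_homog DDs0.
rewrite {1}(shift_deriv3_ker_span (dhomog_shift_deriv s_homog) DDs0).
rewrite (big_ord_widen _ (fun k => coef3 (D s) (d - 2 * k) (2 * k) 0 *: u3 d k)
  (uphalf_leq_halfS d)).
rewrite [RHS]big_mkcond; apply: eq_bigr => k _; case: ifP => // /negbT.
rewrite ltn_uphalf -leqNgt => le_d_2k.
have {le_d_2k} Ed : d = (2 * k)%N by have := ltn_ord k; rewrite ltn_halfS; lia.
case: (nat_of_ord k) Ed => [|N] Ed; rewrite Ed.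
  by rewrite coef3_shift_deriv addr0 scale0r.
by rewrite subnn coef3_top_shift_deriv_ker ?scale0r // -Ed.
Qed.

Section Basis.
Variable d : nat.
Local Notation nu := d./2.+1.
Local Notation nw := (uphalf d).

Definition ker3_basis (i : 'I_(nu + (nw + nw))) : {mpoly R[3]} :=
  match split i with
  | inl k => u3 d k
  | inr j => match split j with inl k => w3 d k | inr k => v3 d k end
  end.

Lemma ker3_basis_sum (c : 'I_(nu + (nw + nw)) -> R) :
  \sum_i c i *: ker3_basis i =
  \sum_(k < nu) c (lshift _ k) *: u3 d k +
  (\sum_(k < nw) c (rshift _ (lshift _ k)) *: w3 d k +
   \sum_(k < nw) c (rshift _ (rshift _ k)) *: v3 d k).
Proof.
rewrite big_split_ord big_split_ord /=; congr (_ + (_ + _)); apply: eq_bigr => k _.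
- by rewrite /ker3_basis (unsplitK (inl _ k)).
- by rewrite /ker3_basis (unsplitK (inr _ (lshift _ k))) (unsplitK (inl _ k)).
- by rewrite /ker3_basis (unsplitK (inr _ (rshift _ k))) (unsplitK (inr _ k)).
Qed.

Lemma shift_deriv_sum_u3 m (a : 'I_m -> R) : D (\sum_k a k *: u3 d k) = 0.
Proof. by rewrite shift_deriv_sumZ big1 // => k _; rewrite shift_deriv_u3 scaler0. Qed.

Lemma shift_deriv_sum_w3 (a : 'I_nw -> R) :
  D (\sum_k a k *: w3 d k) = \sum_k a k *: u3 d k.
Proof.
by rewrite shift_deriv_sumZ; apply: eq_bigr => k _; rewrite shift_deriv_w3 // -ltn_uphalf.
Qed.

Lemma shift_deriv_sum_v3 m (a : 'I_m -> R) :
  D (\sum_k a k *: v3 d k) = \sum_k a k *: w3 d k.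
Proof. by rewrite shift_deriv_sumZ; apply: eq_bigr => k _; rewrite shift_deriv_v3. Qed.

Lemma dhomog_ker3_basis i : ker3_basis i \is d.-homog.
Proof.
rewrite /ker3_basis; case: (split i) => [k|j]; first by rewrite dhomog_u3 // -ltn_halfS.
by case: (split j) => k; rewrite ?dhomog_w3 ?dhomog_v3 // -ltn_uphalf.
Qed.

Lemma iter_shift_deriv_ker3_basis i : iter 3 D (ker3_basis i) = 0.
Proof.
rewrite /= /ker3_basis; case: (split i) => [k|j]; first by rewrite shift_deriv_u3 !raddf0.
case: (split j) => k; first by rewrite shift_deriv_w3 -?ltn_uphalf // shift_deriv_u3 raddf0.
by rewrite shift_deriv_v3 shift_deriv_w3 -?ltn_uphalf // shift_deriv_u3.
Qed.

Lemma ker3_basis_free (c : 'I_(nu + (nw + nw)) -> R) :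
  \sum_i c i *: ker3_basis i = 0 -> forall i, c i = 0.
Proof.
rewrite ker3_basis_sum => Ec.
have cv0 k : c (rshift _ (rshift _ k)) = 0.
  move: k; apply: (u3_free (uphalf_leq_halfS d)).
  have := congr1 (fun p => D (D p)) Ec; rewrite /= !linearD /= shift_deriv_sum_u3.
  rewrite shift_deriv_sum_w3 shift_deriv_sum_u3 shift_deriv_sum_v3 shift_deriv_sum_w3.
  by rewrite !raddf0 !add0r.
move: Ec; rewrite [X in _ + (_ + X)]big1 => [|k _]; last by rewrite cv0 scale0r.
rewrite addr0 => Ec.
have cw0 k : c (rshift _ (lshift _ k)) = 0.
  move: k; apply: (u3_free (uphalf_leq_halfS d)).
  have := congr1 D Ec; rewrite /= !linearD /= shift_deriv_sum_u3.
  by rewrite shift_deriv_sum_w3 !raddf0 add0r.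
move: Ec; rewrite [X in _ + X]big1 => [|k _]; last by rewrite cw0 scale0r.
rewrite addr0 => /(u3_free (leqnn _)) cu0 i.
rewrite -(splitK i); case: (split i) => [k|j] /=; first exact: cu0.
by rewrite -(splitK j); case: (split j) => k /=; [exact: cw0 | exact: cv0].
Qed.

Lemma ker3_basis_span p : p \is d.-homog -> iter 3 D p = 0 ->
  exists c : 'I_(nu + (nw + nw)) -> R, p = \sum_i c i *: ker3_basis i.
Proof.
move=> p_homog /= DDDp0.
have [g Eg] : exists g : 'I_nw -> R, D (D p) = \sum_k g k *: u3 d k.
  by eexists; apply: shift_deriv3_ker_im; rewrite ?dhomog_shift_deriv.
pose p1 := p - \sum_k g k *: v3 d k.
have p1_homog : p1 \is d.-homog.
  by rewrite rpredB // rpred_sum // => k _; rewrite rpredZ // dhomog_v3 // -ltn_uphalf.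
have DDp1 : D (D p1) = 0.
  by rewrite !linearB /= shift_deriv_sum_v3 shift_deriv_sum_w3 Eg subrr.
have [h Eh] : exists h : 'I_nw -> R, D p1 = \sum_k h k *: u3 d k.
  by eexists; apply: shift_deriv3_ker_im.
pose p2 := p1 - \sum_k h k *: w3 d k.
have p2_homog : p2 \is d.-homog.
  by rewrite rpredB // rpred_sum // => k _; rewrite rpredZ // dhomog_w3 // -ltn_uphalf.
have Dp2 : D p2 = 0 by rewrite linearB /= shift_deriv_sum_w3 Eh subrr.
exists (fun i => match split i with
         | inl k => coef3 p2 (d - 2 * k) (2 * k) 0
         | inr j => match split j with inl k => h k | inr k => g k end
         end).
rewrite ker3_basis_sum; under eq_bigr => k _ do rewrite (unsplitK (inl _ k)).
under [in X in _ + (X + _)]eq_bigr => k _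
  do rewrite (unsplitK (inr _ (lshift _ k))) (unsplitK (inl _ k)).
under [in X in _ + (_ + X)]eq_bigr => k _
  do rewrite (unsplitK (inr _ (rshift _ k))) (unsplitK (inr _ k)).
by rewrite -(shift_deriv3_ker_span p2_homog Dp2) addrA subrK subrK.
Qed.

End Basis.

Lemma ker_ad_dim_Nmat3 d : ker_ad_dim d (Nmat R 3)^T (uphalf (3 * d) + 1).
Proof.
rewrite uphalf_3mul_addn1; apply: (@ker_ad_dim_Nmat_tr _ _ _ _ (@ker3_basis d)).
- exact: dhomog_ker3_basis.
- exact: iter_shift_deriv_ker3_basis.
- exact: ker3_basis_free.
- exact: ker3_basis_span.
Qed.

End ThreeVariables.

Theorem lemma5 (R : realFieldType) (d : nat) :
  (1 <= d)%N ->
  ker_ad_dim d (Nmat R 2)^T 2 /\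
  ker_ad_dim d (Nmat R 3)^T (uphalf (3 * d) + 1).
Proof. by move=> d_gt0; split; [exact: ker_ad_dim_Nmat2 | exact: ker_ad_dim_Nmat3]. Qed.
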